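(* Let $\{1\}\to F\xrightarrow{\iota}G\xrightarrow{\pi}H\to\{1\}$ be a split exact sequence of groups with splitting $\sigma:H\to G$, and let $\Theta:H\to\mathrm{Aut}(F)$, $\Theta_h(x)=\iota^{-1}(\sigma(h)\iota(x)\sigma(h)^{-1})$. Then: (a) the composition $\Phi:\mathbf{k}F\otimes\mathbf{k}H\xrightarrow{\mathbf{k}\iota\otimes\mathbf{k}\sigma}\mathbf{k}G\otimes\mathbf{k}G\xrightarrow{\text{mult}}\mathbf{k}G$ is an isomorphism of left $\mathbf{k}F$-modules; (b) if $\Theta_h^{\mathrm{ab}}=\mathrm{id}_{F^{\mathrm{ab}}}$ for every $h\in H$, then for every $n\ge0$, $\Phi$ restricts to an isomorphism of left $\mathbf{k}F$-modules $\sum_{a+b=n}I_F^a\otimes I_H^b\xrightarrow{\sim}I_G^n$ (sum over $a,b\ge0$, inside $\mathbf{k}F\otimes\mathbf{k}H$).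
   Context: $\mathbf{k}$ is a commutative $\mathbb{Q}$-algebra. For a group $G$, $\mathbf{k}G$ is its group algebra, $I_G$ its augmentation ideal (spanned by $g-1$), $I_G^0=\mathbf{k}G$. $\Theta_h^{\mathrm{ab}}$ is the automorphism of the abelianization $F^{\mathrm{ab}}$ induced by $\Theta_h$. *)

From HB Require Import structures.
From mathcomp Require Import all_boot all_order all_algebra.
From mathcomp Require Import finmap.
From mathcomp Require Import monalg.

Set Implicit Arguments.
Unset Strict Implicit.
Unset Printing Implicit Defensive.

Import GRing.Theory.
Local Open Scope ring_scope.

Definition is_Qalgebra (k : comUnitRingType) : Prop :=
  forall n : nat, (n.+1)%:R \is a @GRing.unit k.

(* Group algebra kG : finitely supported functions G -> k, basis [g]. *)
Notation galg k G := {malg k[G]}.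

Definition gb (k : comUnitRingType) (G : groupType) (g : G) : galg k G :=
  << (1 : k) *g g >>.

Definition gmul (k : comUnitRingType) (G : groupType) (u v : galg k G)
  : galg k G :=
  \sum_(x <- msupp u) \sum_(y <- msupp v) << u@_x * v@_y *g (x * y)%g >>.

Definition gmap (k : comUnitRingType) (A B : groupType) (f : A -> B)
  (u : galg k A) : galg k B :=
  \sum_(x <- msupp u) << u@_x *g f x >>.

Inductive kspan (k : comUnitRingType) (V : lmodType k) (S : V -> Prop)
  : V -> Prop :=
| kspan0 : kspan S 0
| kspan_gen v : S v -> kspan S v
| kspan_add v w : kspan S v -> kspan S w -> kspan S (v + w)
| kspan_scale (c : k) v : kspan S v -> kspan S (c *: v).

Definition aug_ideal (k : comUnitRingType) (G : groupType) : galg k G -> Prop :=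
  kspan (fun u => exists g : G, u = @gb k G g - @gb k G 1%g).

Fixpoint aug_pow (k : comUnitRingType) (G : groupType) (n : nat)
  : galg k G -> Prop :=
  match n with
  | 0 => fun _ => True
  | m.+1 => kspan (fun w => exists u v, @aug_pow k G m u /\ @aug_ideal k G v
                                      /\ w = gmul u v)
  end.

(* Tensor product kF (x) kH, realised as the free k-module on F x H
   (the basis x (x) h of kF (x) kH is the pair (x, h)).               *)
Notation tens k F H := {malg k[(F * H)%type]}.

Definition tmul (k : comUnitRingType) (F H : groupType)
  (u : galg k F) (v : galg k H) : tens k F H :=
  \sum_(x <- msupp u) \sum_(y <- msupp v) << u@_x * v@_y *g (x, y) >>.

(* left kF-module structure on kF (x) kH : a . (u (x) v) = (a u) (x) v *)
Definition tact (k : comUnitRingType) (F H : groupType)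
  (a : galg k F) (t : tens k F H) : tens k F H :=
  \sum_(x <- msupp a) \sum_(p <- msupp t)
     << a@_x * t@_p *g ((x * p.1)%g, p.2) >>.

Definition gact (k : comUnitRingType) (F G : groupType) (iota : F -> G)
  (a : galg k F) (g : galg k G) : galg k G :=
  gmul (@gmap k F G iota a) g.

Definition Phi (k : comUnitRingType) (F G H : groupType)
  (iota : F -> G) (sigma : H -> G) (t : tens k F H) : galg k G :=
  \sum_(p <- msupp t) << t@_p *g (iota p.1 * sigma p.2)%g >>.

Definition tens_filt (k : comUnitRingType) (F H : groupType) (n : nat)
  : tens k F H -> Prop :=
  kspan (fun t => exists a b u v, a + b = n /\ @aug_pow k F a u
                                  /\ @aug_pow k H b v /\ t = tmul u v)%N.

Inductive subgroup_gen (G : groupType) (S : G -> Prop) : G -> Prop :=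
| sgen1 : subgroup_gen S 1%g
| sgenM s z : S s -> subgroup_gen S z -> subgroup_gen S (s * z)%g
| sgenV s z : S s -> subgroup_gen S z -> subgroup_gen S (s^-1 * z)%g.

Definition commutator_subgroup (G : groupType) : G -> Prop :=
  subgroup_gen (fun c => exists x y : G, c = [~ x, y]%g).

Definition group_hom (A B : groupType) (f : A -> B) : Prop :=
  forall x y, f (x * y)%g = (f x * f y)%g.

From Pilot Require Import Defs.
From HB Require Import structures.
From mathcomp Require Import all_boot all_order all_algebra.
From mathcomp Require Import finmap.
From mathcomp Require Import monalg.

(* Every g in G factors uniquely as iota(x) sigma(h), with h = pi g, so Phi maps
   the basis F x H of kF (x) kH bijectively onto the basis G of kG; this is (a).
   For (b), Phi maps I_F^a (x) I_H^b into I_G^a I_G^b, which lies in I_G^(a+b).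
   Conversely I_G^(n+1) is spanned by the u (g - 1) with u in I_G^n, and
   g = iota(x) sigma(h), so by induction it suffices that, transported through
   Phi, right multiplication by sigma(h) - 1 and by iota(x) - 1 maps the
   filtration T_n = sum_(a+b=n) I_F^a (x) I_H^b into T_(n+1).  The first acts on
   the H-factor alone.  The second sends u (x) h' to u Theta_h'(x) (x) h' - u (x) h',
   a tensor twisted by Theta.  As Theta_h acts trivially on F^ab, Theta_h(y) y^-1
   is a product of commutators, so Theta_h(y) - y lies in I_F^2 and Theta_h - id
   maps I_F^c into I_F^(c+1): the twist does not lower the filtration degree. *)

Set Implicit Arguments.
Unset Strict Implicit.
Unset Printing Implicit Defensive.
Import GRing.Theory.
Local Open Scope ring_scope.

Section LinearExtension.
Variables (k : comUnitRingType) (T : choiceType) (V : lmodType k).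

Definition linext (f : T -> V) (u : {malg k[T]}) : V :=
  \sum_(x <- msupp u) u@_x *: f x.

Lemma linextEw f u (d : {fset T}) : (msupp u `<=` d)%fset ->
  linext f u = \sum_(x <- d) u@_x *: f x.
Proof.
move=> sub; rewrite /linext (big_fset_incl _ sub) // => x _ /mcoeff_outdom ->.
by rewrite scale0r.
Qed.

Lemma linextD f u v : linext f (u + v) = linext f u + linext f v.
Proof.
rewrite (@linextEw f (u + v) (msupp u `|` msupp v)%fset) ?msuppD_le //.
rewrite (@linextEw f u (msupp u `|` msupp v)%fset) ?fsubsetUl //.
rewrite (@linextEw f v (msupp u `|` msupp v)%fset) ?fsubsetUr //.
by rewrite -big_split /=; apply: eq_bigr => x _; rewrite mcoeffD scalerDl.
Qed.

Lemma linextZ f c u : linext f (c *: u) = c *: linext f u.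
Proof.
rewrite (@linextEw f (c *: u) (msupp u)) ?msuppZ_le // /linext scaler_sumr.
by apply: eq_bigr => x _; rewrite mcoeffZ scalerA.
Qed.

Lemma linextU f x : linext f << x >> = f x.
Proof.
by rewrite (@linextEw f _ [fset x]%fset) ?msuppU_le // big_seq_fset1 mcoeffUU scale1r.
Qed.

Lemma eq_linext f g u : f =1 g -> linext f u = linext g u.
Proof. by move=> eq_fg; apply: eq_bigr => x _; rewrite eq_fg. Qed.

Lemma linext_addf f g u : linext (fun x => f x + g x) u = linext f u + linext g u.
Proof. by rewrite /linext -big_split; apply: eq_bigr => x _; rewrite scalerDr. Qed.

Lemma linext_scalef c f u : linext (fun x => c *: f x) u = c *: linext f u.
Proof.
rewrite /linext scaler_sumr; apply: eq_bigr => x _.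
by rewrite !scalerA mulrC.
Qed.

Lemma malgU_scale c x : << c *g x >> = c *: (<< x >> : {malg k[T]}).
Proof.
apply/malgP => y; rewrite mcoeffZ !mcoeffU.
by case: (x == y); rewrite ?mulr1n ?mulr0n ?mulr1 ?mulr0.
Qed.

End LinearExtension.

Lemma linext_basis (k : comUnitRingType) (T : choiceType) (u : {malg k[T]}) :
  linext (fun x => << x >>) u = u.
Proof.
by rewrite {2}(monalgE u) /linext; apply: eq_bigr => x _; rewrite -malgU_scale.
Qed.

Section LinearMaps.
Variable k : comUnitRingType.

Definition is_linear (U V : lmodType k) (f : U -> V) :=
  (forall u v, f (u + v) = f u + f v) /\ (forall c u, f (c *: u) = c *: f u).

Section Basics.
Variables (U V W : lmodType k).
Implicit Types (f : U -> V) (g : V -> W).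

Lemma linear0 f : is_linear f -> f 0 = 0.
Proof. by case=> _ fZ; rewrite -(scale0r 0) fZ scale0r. Qed.

Lemma linearB f u v : is_linear f -> f (u - v) = f u - f v.
Proof. by case=> fD fZ; rewrite fD -scaleN1r fZ scaleN1r. Qed.

Lemma linear_id : is_linear (fun u : U => u).
Proof. by []. Qed.

Lemma linear_comp f g : is_linear f -> is_linear g -> is_linear (fun u => g (f u)).
Proof. by move=> [fD fZ] [gD gZ]; split=> *; rewrite ?fD ?gD ?fZ ?gZ. Qed.

Lemma linear_sub (f1 f2 : U -> V) :
  is_linear f1 -> is_linear f2 -> is_linear (fun u => f1 u - f2 u).
Proof.
move=> [f1D f1Z] [f2D f2Z]; split=> *; rewrite ?f1D ?f2D ?f1Z ?f2Z.
  by rewrite opprD addrACA.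
by rewrite scalerBr.
Qed.

End Basics.

Section MalgLinear.
Variables (T : choiceType) (V : lmodType k).

Lemma linext_linear (f : T -> V) : is_linear (linext f).
Proof. by split=> *; [exact: linextD | exact: linextZ]. Qed.

Lemma linearE (phi : {malg k[T]} -> V) : is_linear phi ->
  forall u, phi u = linext (fun x => phi << x >>) u.
Proof.
move=> phi_lin u; rewrite -{1}(linext_basis u) /linext.
rewrite (big_morph phi (id1 := 0) (op1 := +%R) phi_lin.1) ?(linear0 phi_lin) //.
by apply: eq_bigr => x _; rewrite phi_lin.2.
Qed.

Lemma linear_ind (phi psi : {malg k[T]} -> V) : is_linear phi -> is_linear psi ->
  (forall x, phi << x >> = psi << x >>) -> forall u, phi u = psi u.
Proof.
by move=> phi_lin psi_lin eq_basis u; rewrite (linearE phi_lin) (linearE psi_lin);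
  apply: eq_linext.
Qed.

End MalgLinear.

Lemma bilinear_ind (T U : choiceType) (V : lmodType k)
    (phi psi : {malg k[T]} -> {malg k[U]} -> V) :
  (forall v, is_linear (phi^~ v)) -> (forall u, is_linear (phi u)) ->
  (forall v, is_linear (psi^~ v)) -> (forall u, is_linear (psi u)) ->
  (forall x y, phi << x >> << y >> = psi << x >> << y >>) ->
  forall u v, phi u v = psi u v.
Proof.
move=> phil phir psil psir eq_basis u v; move: u; apply: linear_ind => // x.
by move: v; apply: linear_ind.
Qed.

End LinearMaps.

Definition is_subspace (k : comUnitRingType) (V : lmodType k) (P : V -> Prop) :=
  [/\ P 0, forall u v, P u -> P v -> P (u + v) & forall c u, P u -> P (c *: u)].

Section Subspaces.
Variables (k : comUnitRingType) (V : lmodType k).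
Implicit Types P : V -> Prop.

Lemma subspace0 P : is_subspace P -> P 0.
Proof. by case. Qed.

Lemma subspaceD P u v : is_subspace P -> P u -> P v -> P (u + v).
Proof. by case=> _ PD _; apply: PD. Qed.

Lemma subspaceZ P c u : is_subspace P -> P u -> P (c *: u).
Proof. by case=> _ _ PZ; apply: PZ. Qed.

Lemma subspaceB P u v : is_subspace P -> P u -> P v -> P (u - v).
Proof.
by move=> subP Pu Pv; rewrite -scaleN1r; apply: subspaceD => //; apply: subspaceZ.
Qed.

Lemma kspan_subspace S : is_subspace (@kspan k V S).
Proof. by split; [exact: kspan0 | exact: kspan_add | exact: kspan_scale]. Qed.

Lemma kspan_ind S P : is_subspace P -> (forall v, S v -> P v) ->
  forall v, kspan S v -> P v.
Proof.
case=> P0 PD PZ PS v; elim: v / => [|v /PS|v w _ Pv _ Pw|c v _ Pv] //.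
- exact: PD.
- exact: PZ.
Qed.

Lemma subspace_preim (U : lmodType k) (phi : U -> V) P :
  is_linear phi -> is_subspace P -> is_subspace (fun u => P (phi u)).
Proof.
move=> [phiD phiZ] subP; split=> [|u v|c u].
- by rewrite -(scale0r 0) phiZ scale0r; apply: subspace0.
- by rewrite phiD; apply: subspaceD.
- by rewrite phiZ; apply: subspaceZ.
Qed.

End Subspaces.

Lemma subspace_ind (k : comUnitRingType) (T : choiceType) (P : {malg k[T]} -> Prop) :
  is_subspace P -> (forall x, P << x >>) -> forall u, P u.
Proof.
move=> subP Pbasis u; rewrite -(linext_basis u) /linext.
by elim/big_ind: _ => [|v w|x _]; [exact: subspace0 | exact: subspaceD | exact: subspaceZ].
Qed.

Lemma hom1 (A B : groupType) (f : A -> B) : group_hom f -> f 1%g = 1%g.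
Proof. by move=> fM; apply: (@mulgI _ (f 1%g)); rewrite -fM !mulg1. Qed.

Lemma homV (A B : groupType) (f : A -> B) x : group_hom f -> f x^-1%g = (f x)^-1%g.
Proof. by move=> fM; apply: (@mulgI _ (f x)); rewrite -fM !mulgV hom1. Qed.

Section GroupAlgebra.
Variables (k : comUnitRingType) (X : groupType).
Local Notation A := (galg k X).
Local Notation gmul := (@gmul k X).
Local Notation I := (@aug_ideal k X).
Local Notation Ipow := (@aug_pow k X).
Implicit Types u v w : A.

Lemma gmulE u v : gmul u v = linext (fun x => linext (fun y => << (x * y)%g >>) v) u.
Proof.
rewrite /Defs.gmul /linext; apply: eq_bigr => x _; rewrite scaler_sumr.
by apply: eq_bigr => y _; rewrite scalerA -malgU_scale.
Qed.

Lemma gmul_linearl v : is_linear (gmul^~ v).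
Proof. by split=> *; rewrite !gmulE; [exact: linextD | exact: linextZ]. Qed.

Lemma gmul_linearr u : is_linear (gmul u).
Proof.
split=> *; rewrite !gmulE.
  by rewrite -linext_addf; apply: eq_linext => x; rewrite linextD.
by rewrite -linext_scalef; apply: eq_linext => x; rewrite linextZ.
Qed.

Lemma gmulU x y : gmul << x >> << y >> = << (x * y)%g >>.
Proof. by rewrite gmulE !linextU. Qed.

Lemma gmulA u v w : gmul (gmul u v) w = gmul u (gmul v w).
Proof.
move: u v; apply: bilinear_ind => [v|u|v|u|x y].
- exact: linear_comp (gmul_linearl v) (gmul_linearl w).
- exact: linear_comp (gmul_linearr u) (gmul_linearl w).
- exact: gmul_linearl.
- exact: linear_comp (gmul_linearl w) (gmul_linearr u).
move: w; apply: linear_ind => [||z].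
- exact: gmul_linearr.
- exact: linear_comp (gmul_linearr _) (gmul_linearr _).
by rewrite !gmulU mulgA.
Qed.

Lemma gmulr1 u : gmul u << 1%g >> = u.
Proof.
move: u; apply: linear_ind => [||x]; [exact: gmul_linearl | exact: linear_id |].
by rewrite gmulU mulg1.
Qed.

Lemma gmul1r u : gmul << 1%g >> u = u.
Proof.
move: u; apply: linear_ind => [||x]; [exact: gmul_linearr | exact: linear_id |].
by rewrite gmulU mul1g.
Qed.

Lemma aug_ideal_subspace : is_subspace I.
Proof. exact: kspan_subspace. Qed.

Lemma aug_pow_subspace n : is_subspace (Ipow n).
Proof. by case: n => [|n]; [split | exact: kspan_subspace]. Qed.

Lemma aug_idealUB1 x : I (<< x >> - << 1%g >>).
Proof. by apply: kspan_gen; exists x. Qed.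

Lemma aug_idealUB x y : I (<< x >> - << y >>).
Proof.
have -> : << x >> - << y >> = (<< x >> - << 1%g >>) - (<< y >> - << 1%g >> : A).
  by rewrite opprB addrA subrK.
exact: subspaceB aug_ideal_subspace (aug_idealUB1 x) (aug_idealUB1 y).
Qed.

Lemma aug_idealMr u v : I u -> I (gmul u v).
Proof.
move: u; apply: kspan_ind.
  exact: subspace_preim (gmul_linearl v) aug_ideal_subspace.
move=> _ [x ->]; move: v; apply: subspace_ind.
  exact: subspace_preim (gmul_linearr _) aug_ideal_subspace.
by move=> y; rewrite (linearB _ _ (gmul_linearl _)) !gmulU mul1g; apply: aug_idealUB.
Qed.

Lemma aug_powSr n u v : Ipow n u -> I v -> Ipow n.+1 (gmul u v).
Proof. by move=> Iu Iv; apply: kspan_gen; exists u, v. Qed.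

Lemma aug_pow1 v : I v -> Ipow 1 v.
Proof. by move=> Iv; rewrite -(gmul1r v); apply: aug_powSr. Qed.

Lemma aug_powMr n u v : Ipow n u -> Ipow n (gmul u v).
Proof.
case: n => [//|n]; move: u; apply: kspan_ind.
  exact: subspace_preim (gmul_linearl v) (aug_pow_subspace _).
move=> _ [u [w [Iu [Iw ->]]]]; rewrite gmulA.
by apply: aug_powSr => //; apply: aug_idealMr.
Qed.

Lemma aug_powM a b u v : Ipow a u -> Ipow b v -> Ipow (a + b) (gmul u v).
Proof.
elim: b v => [|b IHb] v Iu Iv; first by rewrite addn0; apply: aug_powMr.
rewrite addnS; move: v Iv; apply: kspan_ind.
  exact: subspace_preim (gmul_linearr u) (aug_pow_subspace _).
move=> _ [v [w [Iv [Iw ->]]]]; rewrite -gmulA.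
by apply: aug_powSr => //; apply: IHb.
Qed.

Lemma aug_powMl n u v : Ipow n v -> Ipow n (gmul u v).
Proof. exact: (@aug_powM 0). Qed.

Lemma aug_pow_decr n u : Ipow n.+1 u -> Ipow n u.
Proof.
move: u; apply: kspan_ind; first exact: aug_pow_subspace.
by move=> _ [u [w [Iu [_ ->]]]]; apply: aug_powMr.
Qed.

Lemma aug_pow2_commutator x y : Ipow 2 (<< [~ x, y]%g >> - << 1%g >>).
Proof.
pose d z : A := << z >> - << 1%g >>.
have gmul_dd a b :
    gmul (d a) (d b) = << (a * b)%g >> - (<< a >> + (<< b >> - << 1%g >>)).
  by rewrite /d (linearB _ _ (gmul_linearl _)) !(linearB _ _ (gmul_linearr _))
    !gmulU !mulg1 mul1g [in X in _ = X]opprD addrA.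
have -> : << [~ x, y]%g >> - << 1%g >> =
    gmul << ((y * x)^-1)%g >> (gmul (d x) (d y) - gmul (d y) (d x)).
  rewrite !gmul_dd addrCA opprB subrKA.
  rewrite (linearB _ _ (gmul_linearr _)) !gmulU mulVg; congr (<< _ >> - _).
  by rewrite invgM /commg /conjg !mulgA.
apply: aug_powMl; apply: subspaceB (aug_pow_subspace _) _ _;
  by apply: (@aug_powM 1 1); apply: aug_pow1; apply: aug_idealUB1.
Qed.

Lemma aug_pow2_commutator_subgroup c :
  commutator_subgroup c -> Ipow 2 (<< c >> - << 1%g >>).
Proof.
have gen_UB1 s z : Ipow 2 (<< s >> - << 1%g >>) -> Ipow 2 (<< z >> - << 1%g >>) ->
    Ipow 2 (<< (s * z)%g >> - << 1%g >>).
  move=> Is Iz; have -> : << (s * z)%g >> - << 1%g >> =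
      gmul (<< s >> - << 1%g >>) << z >> + (<< z >> - << 1%g >>).
    by rewrite (linearB _ _ (gmul_linearl _)) !gmulU mul1g addrA subrK.
  by apply: subspaceD (aug_pow_subspace _) _ _ => //; apply: aug_powMr.
elim=> [|s z [x [y ->]] _ Iz|s z [x [y ->]] _ Iz].
- by rewrite subrr; apply: subspace0 (aug_pow_subspace _).
- exact: gen_UB1 (aug_pow2_commutator x y) Iz.
- by rewrite invgR; apply: gen_UB1 (aug_pow2_commutator y x) Iz.
Qed.

End GroupAlgebra.

Section GroupAlgebraMap.
Variables (k : comUnitRingType) (X Y : groupType) (f : X -> Y).
Local Notation gmap := (@gmap k X Y f).

Lemma gmapE u : gmap u = linext (fun x => << f x >>) u.
Proof. by rewrite /Defs.gmap /linext; apply: eq_bigr => x _; rewrite -malgU_scale. Qed.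

Lemma gmap_linear : is_linear gmap.
Proof. by split=> *; rewrite !gmapE; [exact: linextD | exact: linextZ]. Qed.

Lemma gmapU x : gmap << x >> = << f x >>.
Proof. by rewrite gmapE linextU. Qed.

Hypothesis fM : group_hom f.

Lemma gmapM u v : gmap (gmul u v) = gmul (gmap u) (gmap v).
Proof.
move: u v; apply: bilinear_ind => [v|u|v|u|x y].
- exact: linear_comp (gmul_linearl v) gmap_linear.
- exact: linear_comp (gmul_linearr u) gmap_linear.
- exact: linear_comp gmap_linear (gmul_linearl _).
- exact: linear_comp gmap_linear (gmul_linearr _).
by rewrite !gmulU !gmapU gmulU fM.
Qed.

Lemma gmap_aug_ideal u : aug_ideal u -> aug_ideal (gmap u).
Proof.
move: u; apply: kspan_ind.
  exact: subspace_preim gmap_linear (@aug_ideal_subspace _ _).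
move=> _ [x ->]; rewrite (linearB _ _ gmap_linear) !gmapU (hom1 fM).
exact: aug_idealUB1.
Qed.

Lemma gmap_aug_pow n u : aug_pow n u -> aug_pow n (gmap u).
Proof.
elim: n u => [//|n IHn]; apply: kspan_ind.
  exact: subspace_preim gmap_linear (@aug_pow_subspace _ _ _).
move=> _ [u [w [Iu [Iw ->]]]]; rewrite gmapM.
by apply: aug_powSr; [exact: IHn | exact: gmap_aug_ideal].
Qed.

End GroupAlgebraMap.

Arguments gmap_linear {k X Y} f.

Section Tensor.
Variables (k : comUnitRingType) (F H : groupType).
Local Notation T := (tens k F H).
Local Notation tmul := (@tmul k F H).
Local Notation tact := (@tact k F H).
Local Notation filt := (@tens_filt k F H).
Implicit Types (t : T) (a u : galg k F) (v : galg k H).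

Lemma tmulE u v : tmul u v = linext (fun x => linext (fun y => << (x, y) >>) v) u.
Proof.
rewrite /Defs.tmul /linext; apply: eq_bigr => x _; rewrite scaler_sumr.
by apply: eq_bigr => y _; rewrite scalerA -malgU_scale.
Qed.

Lemma tmul_linearl v : is_linear (tmul^~ v).
Proof. by split=> *; rewrite !tmulE; [exact: linextD | exact: linextZ]. Qed.

Lemma tmul_linearr u : is_linear (tmul u).
Proof.
split=> *; rewrite !tmulE.
  by rewrite -linext_addf; apply: eq_linext => x; rewrite linextD.
by rewrite -linext_scalef; apply: eq_linext => x; rewrite linextZ.
Qed.

Lemma tmulU x y : tmul << x >> << y >> = << (x, y) >>.
Proof. by rewrite tmulE !linextU. Qed.

Lemma tactE a t :
  tact a t = linext (fun x => linext (fun p => << ((x * p.1)%g, p.2) >>) t) a.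
Proof.
rewrite /Defs.tact /linext; apply: eq_bigr => x _; rewrite scaler_sumr.
by apply: eq_bigr => p _; rewrite scalerA -malgU_scale.
Qed.

Lemma tact_linearl t : is_linear (tact^~ t).
Proof. by split=> *; rewrite !tactE; [exact: linextD | exact: linextZ]. Qed.

Lemma tact_linearr a : is_linear (tact a).
Proof.
split=> *; rewrite !tactE.
  by rewrite -linext_addf; apply: eq_linext => x; rewrite linextD.
by rewrite -linext_scalef; apply: eq_linext => x; rewrite linextZ.
Qed.

Lemma tactU x p : tact << x >> << p >> = << ((x * p.1)%g, p.2) >>.
Proof. by rewrite tactE !linextU. Qed.

Lemma tact_tmul a u v : tact a (tmul u v) = tmul (gmul a u) v.
Proof.
move: a u; apply: bilinear_ind => [u|a|u|a|x y].
- exact: tact_linearl.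
- exact: linear_comp (tmul_linearl v) (tact_linearr a).
- exact: linear_comp (gmul_linearl u) (tmul_linearl v).
- exact: linear_comp (gmul_linearr a) (tmul_linearl v).
move: v; apply: linear_ind => [||z].
- exact: linear_comp (tmul_linearr _) (tact_linearr _).
- exact: tmul_linearr.
by rewrite gmulU !tmulU tactU.
Qed.

Definition tens_rmul (h : H) (t : T) : T := linext (fun p => << (p.1, (p.2 * h)%g) >>) t.

Lemma tens_rmul_linear h : is_linear (tens_rmul h).
Proof. exact: linext_linear. Qed.

Lemma tens_rmul_tmul h u v : tens_rmul h (tmul u v) = tmul u (gmul v << h >>).
Proof.
move: u v; apply: bilinear_ind => [v|u|v|u|x y].
- exact: linear_comp (tmul_linearl v) (tens_rmul_linear h).
- exact: linear_comp (tmul_linearr u) (tens_rmul_linear h).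
- exact: tmul_linearl.
- exact: linear_comp (gmul_linearl _) (tmul_linearr u).
by rewrite !tmulU gmulU tmulU /tens_rmul linextU.
Qed.

Lemma filt_subspace n : is_subspace (filt n).
Proof. exact: kspan_subspace. Qed.

Lemma filt_tmul i j n u v :
  aug_pow i u -> aug_pow j v -> (i + j)%N = n -> filt n (tmul u v).
Proof. by move=> Iu Iv ij_n; apply: kspan_gen; exists i, j, u, v. Qed.

Lemma filt0 t : filt 0 t.
Proof.
move: t; apply: subspace_ind; first exact: filt_subspace.
by move=> [x y]; rewrite -tmulU; apply: (@filt_tmul 0 0).
Qed.

Lemma filt_decr n t : filt n.+1 t -> filt n t.
Proof.
move: t; apply: kspan_ind; first exact: filt_subspace.
move=> _ [[|a] [b [u [v [ab_n [Iu [Iv ->]]]]]]].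
  by apply: (@filt_tmul 0 n) => //; move: ab_n Iv; rewrite add0n => -> /aug_pow_decr.
apply: (@filt_tmul a b) => //; first exact: aug_pow_decr.
by move: ab_n; rewrite addSn => -[].
Qed.

Lemma filt_tact i n u t : aug_pow i u -> filt n t -> filt (i + n) (tact u t).
Proof.
move=> Iu; move: t; apply: kspan_ind.
  exact: subspace_preim (tact_linearr _) (filt_subspace _).
move=> _ [a [b [u' [v [ab_n [Iu' [Iv ->]]]]]]]; rewrite tact_tmul.
by apply: (@filt_tmul (i + a) b); [exact: aug_powM | | rewrite -addnA ab_n].
Qed.

Lemma filt_rmul n h t : filt n t -> filt n (tens_rmul h t).
Proof.
move: t; apply: kspan_ind.
  exact: subspace_preim (tens_rmul_linear h) (filt_subspace _).
move=> _ [a [b [u [v [ab_n [Iu [Iv ->]]]]]]]; rewrite tens_rmul_tmul.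
by apply: (@filt_tmul a b) => //; apply: aug_powMr.
Qed.

Lemma filt_rmulB n h t : filt n t -> filt n.+1 (tens_rmul h t - t).
Proof.
move: t; apply: kspan_ind.
  exact: subspace_preim (linear_sub (tens_rmul_linear h) (linear_id _)) (filt_subspace _).
move=> _ [a [b [u [v [ab_n [Iu [Iv ->]]]]]]].
rewrite tens_rmul_tmul -[in X in _ - X](gmulr1 v) -(linearB _ _ (tmul_linearr _)).
rewrite -(linearB _ _ (gmul_linearr _)).
apply: (@filt_tmul a b.+1); rewrite ?addnS ?ab_n //.
by apply: aug_powSr => //; apply: aug_idealUB1.
Qed.

End Tensor.

Arguments tmul_linearl {k F H} v.
Arguments tmul_linearr {k F H} u.
Arguments tact_linearr {k F H} a.
Arguments tens_rmul_linear {k F H} h.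

Section SplitExtension.
Variables (k : comUnitRingType) (F G H : groupType).
Variables (iota : F -> G) (pi : G -> H) (sigma : H -> G).
Hypotheses (iotaM : group_hom iota) (piM : group_hom pi) (sigmaM : group_hom sigma).
Hypothesis iota_inj : injective iota.
Hypothesis ker_pi : forall g : G, pi g = 1%g <-> exists x : F, iota x = g.
Hypothesis sigmaK : forall h : H, pi (sigma h) = h.

Local Notation T := (tens k F H).
Local Notation Phi := (@Phi k F G H iota sigma).
Implicit Types (t : T) (u w z : galg k F) (v : galg k H).

Lemma pi_iota x : pi (iota x) = 1%g.
Proof. by apply/ker_pi; exists x. Qed.

Lemma retraction_ex g : exists x, iota x == (g * (sigma (pi g))^-1)%g.
Proof.
have [x <-] : exists x, iota x = (g * (sigma (pi g))^-1)%g.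
  by apply/ker_pi; rewrite piM (homV _ piM) sigmaK mulgV.
by exists x.
Qed.

Definition retraction g : F := xchoose (retraction_ex g).

Lemma iota_retraction g : iota (retraction g) = (g * (sigma (pi g))^-1)%g.
Proof. exact/eqP/(xchooseP (retraction_ex g)). Qed.

Lemma retractionK g : (iota (retraction g) * sigma (pi g))%g = g.
Proof. by rewrite iota_retraction mulgVK. Qed.

Lemma iota_retraction_ker g : pi g = 1%g -> iota (retraction g) = g.
Proof. by move=> pi_g; rewrite iota_retraction pi_g (hom1 sigmaM) invg1 mulg1. Qed.

Definition theta h x : F := retraction (sigma h * iota x * (sigma h)^-1).

Lemma iota_theta h x : iota (theta h x) = (sigma h * iota x * (sigma h)^-1)%g.
Proof.
by apply: iota_retraction_ker; rewrite !piM (homV _ piM) sigmaK pi_iota mulg1 mulgV.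
Qed.

Lemma theta_hom h : group_hom (theta h).
Proof. by move=> x y; apply: iota_inj; rewrite iotaM !iota_theta iotaM !mulgA mulgVK. Qed.

Lemma thetaM h h' x : theta (h * h') x = theta h (theta h' x).
Proof. by apply: iota_inj; rewrite !iota_theta sigmaM invgM !mulgA. Qed.

Lemma PhiE t : Phi t = linext (fun p => << (iota p.1 * sigma p.2)%g >>) t.
Proof. by rewrite /Defs.Phi /linext; apply: eq_bigr => p _; rewrite -malgU_scale. Qed.

Lemma Phi_linear : is_linear Phi.
Proof. by split=> *; rewrite !PhiE; [exact: linextD | exact: linextZ]. Qed.

Lemma PhiU p : Phi << p >> = << (iota p.1 * sigma p.2)%g >>.
Proof. by rewrite PhiE linextU. Qed.

Lemma Phi_tmul u v : Phi (tmul u v) = gmul (gmap iota u) (gmap sigma v).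
Proof.
move: u v; apply: bilinear_ind => [v|u|v|u|x y].
- exact: linear_comp (tmul_linearl v) Phi_linear.
- exact: linear_comp (tmul_linearr u) Phi_linear.
- exact: linear_comp (gmap_linear _) (gmul_linearl _).
- exact: linear_comp (gmap_linear _) (gmul_linearr _).
by rewrite tmulU PhiU !gmapU gmulU.
Qed.

Lemma Phi_tact u t : Phi (tact u t) = gmul (gmap iota u) (Phi t).
Proof.
move: u t; apply: bilinear_ind => [t|u|t|u|x p].
- exact: linear_comp (tact_linearl t) Phi_linear.
- exact: linear_comp (tact_linearr u) Phi_linear.
- exact: linear_comp (gmap_linear _) (gmul_linearl _).
- exact: linear_comp Phi_linear (gmul_linearr _).
by rewrite tactU !PhiU gmapU gmulU iotaM mulgA.
Qed.

Lemma Phi_rmul h t : Phi (tens_rmul h t) = gmul (Phi t) << sigma h >>.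
Proof.
move: t; apply: linear_ind => [||p].
- exact: linear_comp (tens_rmul_linear h) Phi_linear.
- exact: linear_comp Phi_linear (gmul_linearl _).
by rewrite /tens_rmul linextU !PhiU gmulU sigmaM mulgA.
Qed.

Definition tens_rmul_iota x t : T :=
  linext (fun p => << ((p.1 * theta p.2 x)%g, p.2) >>) t.

Lemma tens_rmul_iota_linear x : is_linear (tens_rmul_iota x).
Proof. exact: linext_linear. Qed.

Lemma Phi_rmul_iota x t : Phi (tens_rmul_iota x t) = gmul (Phi t) << iota x >>.
Proof.
move: t; apply: linear_ind => [||p].
- exact: linear_comp (tens_rmul_iota_linear x) Phi_linear.
- exact: linear_comp Phi_linear (gmul_linearl _).
by rewrite /tens_rmul_iota linextU !PhiU gmulU /= iotaM iota_theta !mulgA mulgVK.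
Qed.

Definition Psi (g : galg k G) : T := linext (fun g => << (retraction g, pi g) >>) g.

Lemma Psi_linear : is_linear Psi.
Proof. exact: linext_linear. Qed.

Lemma PhiK : cancel Phi Psi.
Proof.
apply: linear_ind => [||[x h]].
- exact: linear_comp Phi_linear Psi_linear.
- exact: linear_id.
have pi_xh : pi (iota x * sigma h)%g = h by rewrite piM pi_iota sigmaK mul1g.
rewrite PhiU /Psi linextU /= pi_xh; congr << (_, _) >>.
by apply: iota_inj; apply: (@mulIg _ (sigma h)); rewrite -{2}pi_xh retractionK.
Qed.

Lemma PsiK : cancel Psi Phi.
Proof.
apply: linear_ind => [||g].
- exact: linear_comp Psi_linear Phi_linear.
- exact: linear_id.
by rewrite /Psi linextU PhiU retractionK.
Qed.

Lemma aug_pow_Phi n t : tens_filt n t -> aug_pow n (Phi t).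
Proof.
move: t; apply: kspan_ind.
  exact: subspace_preim Phi_linear (aug_pow_subspace _ _ _).
move=> _ [i [j [u [v [<- [Iu [Iv ->]]]]]]]; rewrite Phi_tmul.
by apply: aug_powM; apply: gmap_aug_pow.
Qed.

Definition twisted_tmul w v : T :=
  linext (fun y => linext (fun h => << (theta h y, h) >>) v) w.

Lemma twisted_tmul_linearl v : is_linear (twisted_tmul^~ v).
Proof. exact: linext_linear. Qed.

Lemma twisted_tmul_linearr w : is_linear (twisted_tmul w).
Proof.
split=> *; rewrite /twisted_tmul.
  by rewrite -linext_addf; apply: eq_linext => x; rewrite linextD.
by rewrite -linext_scalef; apply: eq_linext => x; rewrite linextZ.
Qed.

Lemma twisted_tmulU y h : twisted_tmul << y >> << h >> = << (theta h y, h) >>.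
Proof. by rewrite /twisted_tmul !linextU. Qed.

Lemma twisted_tmulUr w h : twisted_tmul w << h >> = tmul (gmap (theta h) w) << h >>.
Proof.
move: w; apply: linear_ind => [||y].
- exact: twisted_tmul_linearl.
- exact: linear_comp (gmap_linear _) (tmul_linearl _).
by rewrite twisted_tmulU gmapU tmulU.
Qed.

Lemma twisted_tmul1l v : twisted_tmul << 1%g >> v = tmul << 1%g >> v.
Proof.
move: v; apply: linear_ind => [||h].
- exact: twisted_tmul_linearr.
- exact: tmul_linearr.
by rewrite twisted_tmulU tmulU (hom1 (theta_hom h)).
Qed.

Lemma twisted_tmul_gmulU w v h :
  twisted_tmul w (gmul v << h >>) = tens_rmul h (twisted_tmul (gmap (theta h) w) v).
Proof.
move: w v; apply: bilinear_ind => [v|w|v|w|y h'].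
- exact: twisted_tmul_linearl.
- exact: linear_comp (gmul_linearl _) (twisted_tmul_linearr w).
- exact: linear_comp (linear_comp (gmap_linear _) (twisted_tmul_linearl v))
    (tens_rmul_linear h).
- exact: linear_comp (twisted_tmul_linearr _) (tens_rmul_linear h).
by rewrite gmulU gmapU !twisted_tmulU /tens_rmul linextU /= thetaM.
Qed.

Lemma tens_rmul_iota_tmul x u v :
  tens_rmul_iota x (tmul u v) = tact u (twisted_tmul << x >> v).
Proof.
move: u v; apply: bilinear_ind => [v|u|v|u|y h].
- exact: linear_comp (tmul_linearl v) (tens_rmul_iota_linear x).
- exact: linear_comp (tmul_linearr u) (tens_rmul_iota_linear x).
- exact: tact_linearl.
- exact: linear_comp (twisted_tmul_linearr _) (tact_linearr u).
by rewrite tmulU twisted_tmulU tactU /tens_rmul_iota linextU.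
Qed.

Section TrivialOnAbelianization.
Hypothesis theta_ab : forall (h : H) (x y : F),
  iota y = (sigma h * iota x * (sigma h)^-1)%g -> commutator_subgroup (y * x^-1)%g.

Lemma gmap_thetaB_linear h : is_linear (fun w => gmap (theta h) w - w).
Proof. exact: linear_sub (gmap_linear _) (linear_id _). Qed.

Lemma aug_pow2_gmap_thetaB h z : aug_ideal z -> aug_pow 2 (gmap (theta h) z - z).
Proof.
move: z; apply: kspan_ind.
  exact: subspace_preim (gmap_thetaB_linear h) (aug_pow_subspace _ _ _).
move=> _ [y ->]; rewrite (linearB _ _ (gmap_thetaB_linear h)) !gmapU.
rewrite (hom1 (theta_hom h)) subrr subr0.
have -> : << theta h y >> - << y >> =
    gmul (<< (theta h y * y^-1)%g >> - << 1%g >>) (<< y >> : galg k F).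
  by rewrite (linearB _ _ (gmul_linearl _)) !gmulU mulgVK mul1g.
apply/aug_powMr/aug_pow2_commutator_subgroup.
exact: theta_ab (iota_theta h y).
Qed.

Lemma aug_pow_gmap_thetaB n h w : aug_pow n w -> aug_pow n.+1 (gmap (theta h) w - w).
Proof.
elim: n w => [|n IHn] w.
  move=> _; move: w; apply: subspace_ind.
    exact: subspace_preim (gmap_thetaB_linear h) (aug_pow_subspace _ _ _).
  by move=> y; rewrite gmapU; apply: aug_pow1; apply: aug_idealUB.
move: w; apply: kspan_ind.
  exact: subspace_preim (gmap_thetaB_linear h) (aug_pow_subspace _ _ _).
move=> _ [u [z [Iu [Iz ->]]]]; rewrite gmapM; last exact: theta_hom.
have -> : gmul (gmap (theta h) u) (gmap (theta h) z) - gmul u z =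
    gmul (gmap (theta h) u - u) (gmap (theta h) z) + gmul u (gmap (theta h) z - z).
  by rewrite (linearB _ _ (gmul_linearl _)) (linearB _ _ (gmul_linearr _)) addrA subrK.
apply: subspaceD (aug_pow_subspace _ _ _) _ _.
  by apply: aug_powSr; [exact: IHn | apply: gmap_aug_ideal; first exact: theta_hom].
by rewrite -addn2; apply: aug_powM => //; apply: aug_pow2_gmap_thetaB.
Qed.

Lemma filt_twisted_tmul i j w v :
  aug_pow i w -> aug_pow j v -> tens_filt (i + j) (twisted_tmul w v).
Proof.
elim: j i w v => [|j IHj] i w v Iw.
  move=> _; rewrite addn0; move: v; apply: subspace_ind.
    exact: subspace_preim (twisted_tmul_linearr w) (filt_subspace _ _ _ _).
  move=> h; rewrite twisted_tmulUr; apply: (@filt_tmul _ _ _ i 0); rewrite ?addn0 //.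
  by apply: gmap_aug_pow; first exact: theta_hom.
move: v; apply: kspan_ind.
  exact: subspace_preim (twisted_tmul_linearr w) (filt_subspace _ _ _ _).
move=> _ [v [z [Iv [Iz ->]]]]; move: z Iz; apply: kspan_ind.
  exact: subspace_preim (linear_comp (gmul_linearr v) (twisted_tmul_linearr w))
    (filt_subspace _ _ _ _).
move=> _ [h ->]; rewrite (linearB _ _ (gmul_linearr _)) gmulr1.
rewrite (linearB _ _ (twisted_tmul_linearr _)) twisted_tmul_gmulU.
have -> : tens_rmul h (twisted_tmul (gmap (theta h) w) v) - twisted_tmul w v =
    tens_rmul h (twisted_tmul (gmap (theta h) w - w) v) +
    (tens_rmul h (twisted_tmul w v) - twisted_tmul w v).
  by rewrite (linearB _ _ (twisted_tmul_linearl _)) (linearB _ _ (tens_rmul_linear _))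
    addrA subrK.
apply: subspaceD (filt_subspace _ _ _ _) _ _; rewrite addnS.
  by rewrite -addSn; apply: filt_rmul; apply: IHj => //; apply: aug_pow_gmap_thetaB.
by apply: filt_rmulB; apply: IHj.
Qed.

Lemma filt_rmul_iotaB n x t : tens_filt n t -> tens_filt n.+1 (tens_rmul_iota x t - t).
Proof.
move: t; apply: kspan_ind.
  exact: subspace_preim (linear_sub (tens_rmul_iota_linear x) (linear_id _))
    (filt_subspace _ _ _ _).
move=> _ [i [j [u [v [ij_n [Iu [Iv ->]]]]]]].
have -> : tens_rmul_iota x (tmul u v) - tmul u v =
    tact u (twisted_tmul (<< x >> - << 1%g >>) v).
  by rewrite tens_rmul_iota_tmul (linearB _ _ (twisted_tmul_linearl _))
    (linearB _ _ (tact_linearr _)) twisted_tmul1l tact_tmul gmulr1.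
rewrite -ij_n -addnS; apply: filt_tact => //.
by rewrite -add1n; apply: filt_twisted_tmul => //; apply/aug_pow1/aug_idealUB1.
Qed.

Lemma filt_Psi_gmulB n t g :
  tens_filt n t -> tens_filt n.+1 (Psi (gmul (Phi t) (<< g >> - << 1%g >>))).
Proof.
move=> filt_t; set s := tens_rmul_iota (retraction g) t.
have -> : gmul (Phi t) (<< g >> - << 1%g >>) = Phi (tens_rmul (pi g) s - t).
  rewrite (linearB _ _ Phi_linear) Phi_rmul Phi_rmul_iota.
  by rewrite (linearB _ _ (gmul_linearr _)) gmulr1 gmulA gmulU retractionK.
have filt_sB : tens_filt n.+1 (s - t) by apply: filt_rmul_iotaB.
have filt_s : tens_filt n s.
  by rewrite -(subrK t s); apply: subspaceD (filt_subspace _ _ _ _) _ _ => //;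
    apply: filt_decr.
have -> : tens_rmul (pi g) s - t = (tens_rmul (pi g) s - s) + (s - t).
  by rewrite addrA subrK.
by rewrite PhiK; apply: subspaceD (filt_subspace _ _ _ _) _ _ => //; apply: filt_rmulB.
Qed.

Lemma filt_Psi n g : aug_pow n g -> tens_filt n (Psi g).
Proof.
elim: n g => [|n IHn]; first by move=> g _; apply: filt0.
apply: kspan_ind; first exact: subspace_preim Psi_linear (filt_subspace _ _ _ _).
move=> _ [u [v [Iu [Iv ->]]]]; rewrite -(PsiK u).
have := IHn u Iu; move: (Psi u) => t filt_t; move: v Iv; apply: kspan_ind.
  exact: subspace_preim (linear_comp (gmul_linearr _) Psi_linear) (filt_subspace _ _ _ _).
by move=> _ [g ->]; apply: filt_Psi_gmulB.
Qed.

End TrivialOnAbelianization.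
End SplitExtension.

Theorem propositionC1
  (k : comUnitRingType) (hk : is_Qalgebra k)
  (F G H : groupType) (iota : F -> G) (pi : G -> H) (sigma : H -> G)
  (hiota : group_hom iota) (hpi : group_hom pi) (hsigma : group_hom sigma)
  (iota_inj : injective iota)
  (pi_surj : forall h : H, exists g : G, pi g = h)
  (exact_mid : forall g : G, pi g = 1%g <-> exists x : F, iota x = g)
  (split : forall h : H, pi (sigma h) = h) :
  (* (a) Phi is an isomorphism of left kF-modules *)
  ((forall t1 t2 : tens k F H,
      Phi iota sigma (t1 + t2) = Phi iota sigma t1 + Phi iota sigma t2)
   /\ (forall (c : k) (t : tens k F H),
      Phi iota sigma (c *: t) = c *: Phi iota sigma t)
   /\ (forall (a : galg k F) (t : tens k F H),
      Phi iota sigma (tact a t) = gact iota a (Phi iota sigma t))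
   /\ bijective (Phi (k := k) iota sigma))
  /\
  (* (b) if every Theta_h induces the identity on F^ab, Phi maps
     sum_{a+b=n} I_F^a (x) I_H^b onto I_G^n *)
  ((forall (h : H) (x y : F),
      iota y = (sigma h * iota x * (sigma h)^-1)%g ->
      commutator_subgroup (y * x^-1)%g) ->
   forall n : nat,
     (forall t : tens k F H,
        tens_filt n t -> @aug_pow k G n (Phi iota sigma t))
     /\ (forall g : galg k G,
        @aug_pow k G n g -> exists t, tens_filt n t /\ Phi iota sigma t = g)).
Proof.
pose Psi := Psi (k := k) hpi exact_mid split.
have [PhiD PhiZ] := @Phi_linear k F G H iota sigma.
split.
  split; first exact: PhiD.
  split; first exact: PhiZ.
  split; first exact: Phi_tact hiota.
  by exists Psi; [exact: PhiK iota_inj exact_mid split | exact: PsiK].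
move=> theta_ab n; split=> [t|g Ig]; first exact: aug_pow_Phi.
exists (Psi g); split; last exact: PsiK.
exact: filt_Psi hiota hpi hsigma iota_inj exact_mid split theta_ab n g Ig.
Qed.
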